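(* Let $p\in(0,1)$, $\beta\in\mathbb{R}$, $l\ge1$ and $1\le n\le l$ be fixed, let $\theta=0$ and $\alpha=\frac{k}{3^n}$ with $k\in\{0,\dots,3^n-1\}$. There exist functions $\phi_{p,\beta,\frac{k}{3^n},0}$ and $\psi_{p,\beta,\frac{k}{3^n},0}$ such that $H^{(l)}_{p,\beta,\frac{k}{3^n},0}$ is spectrally similar to $\Delta^{(l-n)}_p$ with respect to $\phi_{p,\beta,\frac{k}{3^n},0}$ and $\psi_{p,\beta,\frac{k}{3^n},0}$.
   Context: For $x\in\mathbb{Z}_+\setminus\{0\}$ let $m(x)$ be the largest integer $m\ge0$ with $3^m\mid x$. For $x\ge1$ set $p(x,x-1)=1-p,\ p(x,x+1)=p$ if $3^{-m(x)}x\equiv1\pmod3$, and $p(x,x-1)=p,\ p(x,x+1)=1-p$ if $3^{-m(x)}x\equiv2\pmod3$. Let $V_l=\{0,1,\dots,3^l\}$. The operator $H^{(l)}_{p,\beta,\alpha,\theta}$ acts on $f:V_l\to\mathbb{C}$ by $(H^{(l)}f)(0)=\beta\cos(\theta)f(0)-f(1)$, $(H^{(l)}f)(3^l)=\beta\cos(2\pi\alpha3^l+\theta)f(3^l)-f(3^l-1)$, and for $1\le x\le3^l-1$: $(H^{(l)}f)(x)=\beta\cos(2\pi\alpha x+\theta)f(x)-p(x,x-1)f(x-1)-p(x,x+1)f(x+1)$. The Laplacian $\Delta^{(j)}_p$ on $V_j$ is $(\Delta^{(j)}_pf)(0)=f(0)-f(1)$, $(\Delta^{(j)}_pf)(x)=f(x)-p(x,x-1)f(x-1)-p(x,x+1)f(x+1)$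 for $1\le x\le3^j-1$, $(\Delta^{(j)}_pf)(3^j)=f(3^j)-f(3^j-1)$. Spectral similarity: given Hilbert spaces $\mathcal{H}_0,\mathcal{H}$, an isometry $U:\mathcal{H}_0\to\mathcal{H}$ and bounded operators $H$ on $\mathcal{H}$, $H_0$ on $\mathcal{H}_0$, $H$ is spectrally similar to $H_0$ with functions $\phi,\psi$ if $U^*(H-z)^{-1}U=(\phi(z)H_0-\psi(z))^{-1}$ for all $z\in\mathbb{C}$ for which both sides are defined. Here $\mathcal{H}=\mathbb{C}^{V_l}$, $\mathcal{H}_0=\mathrm{span}\{\delta_v: v\equiv0 \pmod{3^n}\}\subset\mathcal{H}$ identified with $\mathbb{C}^{V_{l-n}}$ via $v\mapsto v/3^n$, and $U$ is the inclusion. *)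

From HB Require Import structures.
From mathcomp Require Import all_boot all_order all_algebra.
From mathcomp Require Import reals trigo.
From mathcomp Require Import complex.
Set Implicit Arguments. Unset Strict Implicit. Unset Printing Implicit Defensive.
Import Order.TTheory GRing.Theory Num.Theory ComplexField.
Local Open Scope ring_scope.
Local Open Scope complex_scope.

Section Defs.
Variable R : realType.

(* right-step probability at x >= 1: with m(x) = logn 3 x, the 3-free part
   x %/ 3^m(x) is 1 or 2 mod 3. *)
Definition pright (p : R) (x : nat) : R :=
  if ((x %/ 3 ^ logn 3 x) %% 3 == 1)%N then p else 1 - p.
Definition pleft (p : R) (x : nat) : R := 1 - pright p x.

Definition walk (p : R) (N x y : nat) : R :=
  if x == 0%N then (y == 1%N)%:R
  else if x == N then (y == N.-1)%:R
  else if y == x.+1 then pright p x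
  else if y.+1 == x then pleft p x
  else 0.

Definition Hop (p beta alpha theta : R) (l : nat) : 'M[R[i]]_((3 ^ l).+1) :=
  \matrix_(i, j)
    ((if i == j then beta * cos (2 * pi * alpha * (i : nat)%:R + theta) else 0)
     - walk p (3 ^ l) i j)%:C.

Definition Lap (p : R) (j : nat) : 'M[R[i]]_((3 ^ j).+1) :=
  \matrix_(x, y) ((x == y)%:R - walk p (3 ^ j) x y)%:C.

Definition incl (l n : nat) : 'M[R[i]]_((3 ^ l).+1, (3 ^ (l - n)).+1) :=
  \matrix_(x, y) ((x : nat) == 3 ^ n * y)%N%:R.

(* Spectral similarity (partial functions phi, psi given as option-valued):
   U^* (H - z)^{-1} U = (phi(z) H0 - psi(z))^{-1} whenever both sides are defined. *)
Definition spectrally_similar (m k : nat) (U : 'M[R[i]]_(m, k))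
  (H : 'M[R[i]]_m) (H0 : 'M[R[i]]_k) (phi psi : R[i] -> option R[i]) : Prop :=
  forall (z a b : R[i]), phi z = Some a -> psi z = Some b ->
    (H - z%:M) \in unitmx -> (a *: H0 - b%:M) \in unitmx ->
    (map_mx conjc U)^T *m invmx (H - z%:M) *m U = invmx (a *: H0 - b%:M).

End Defs.

(* Since alpha = k/3^n, the potential x |-> beta cos(2 pi alpha x) is periodic
   mod 3^n and invariant under x |-> 3^n - x.  Off the multiples of 3^n the
   transition probabilities share these symmetries (the reflection exchanging
   p(x,x+1) and p(x,x-1)), while at 3^n q they are those of q in the coarse walk.
   Let u solve the Dirichlet problem (H - z) u = 0 on the cell (0, 3^n) with
   u(0) = 1, u(3^n) = 0; this is possible unless z is an eigenvalue of a fixed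
   matrix.  The tent functions X_y(x) = u(|x - 3^n y|) satisfy (H - z) X_y = 0
   off the coarse grid, and on it (H - z) X_y is column y of phi(z) Delta - psi(z)
   with phi(z) = u(3^n - 1) and psi(z) = phi(z) - beta + z + u(1).  As U^* X = 1,
   (H - z) X = U (phi Delta - psi) yields U^* (H - z)^-1 U = (phi Delta - psi)^-1. *)

From mathcomp Require Import all_boot all_order all_algebra.
From mathcomp Require Import reals trigo.
From mathcomp Require Import complex.
From mathcomp Require Import zify ring.
Import GRing.Theory Num.Theory ComplexField.
Local Open Scope ring_scope.
Local Open Scope complex_scope.

Lemma sumr_ord_eqn {C : pzSemiRingType} m x (F : nat -> C) :
  \sum_(j < m) ((j : nat) == x)%:R * F j = (x < m)%:R * F x.
Proof.
rewrite (bigID (fun j : 'I_m => (j : nat) == x)) /=.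
rewrite [X in _ + X]big1 => [|j /negbTE ->]; last by rewrite mul0r.
rewrite addr0 (eq_bigr (fun j : 'I_m => F j)) => [|j /eqP ->]; last by rewrite eqxx mul1r.
by rewrite big_ord1_eq; case: ltnP; rewrite ?mul1r ?mul0r.
Qed.

Lemma sum_tridiag (C : comPzRingType) m x (c a b : C) (f : nat -> C) :
  \sum_(y < m) (((y : nat) == x)%:R * c + ((y : nat) == x.+1)%:R * a
                + ((y : nat) == x.-1)%:R * b) * f y =
  (x < m)%:R * (c * f x) + (x.+1 < m)%:R * (a * f x.+1)
  + (x.-1 < m)%:R * (b * f x.-1).
Proof.
rewrite -(sumr_ord_eqn m x (fun y => c * f y)).
rewrite -(sumr_ord_eqn m x.+1 (fun y => a * f y)).
rewrite -(sumr_ord_eqn m x.-1 (fun y => b * f y)) -!big_split /=.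
by apply: eq_bigr => y _; ring.
Qed.

Lemma compression_invmx {C : comUnitRingType} {m k : nat} {U : 'M[C]_(m, k)}
    {V : 'M[C]_(k, m)} {H : 'M[C]_m} {X : 'M[C]_(m, k)} {Y : 'M[C]_k} :
  V *m X = 1%:M -> H *m X = U *m Y -> H \in unitmx ->
  Y \in unitmx /\ V *m invmx H *m U = invmx Y.
Proof.
move=> VX1 HXUY Hu.
have VHUY : V *m invmx H *m U *m Y = 1%:M by rewrite -!mulmxA -HXUY mulKmx.
have [_ Yu] := mulmx1_unit VHUY.
by split=> //; rewrite -[LHS]mulmx1 -(mulmxV Yu) mulmxA VHUY mul1mx.
Qed.

Lemma eigenvalues_finite {F : decFieldType} {m : nat} (A : 'M[F]_m) :
  exists s : seq F, forall z, A - z%:M \notin unitmx -> z \in s.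
Proof.
have [s [q [charA q_noroot]]] := dec_factor_theorem (char_poly A).
have q_neq0 : q != 0.
  apply: contraTneq (monic_neq0 (char_poly_monic A)) => q0.
  by rewrite charA q0 mul0r eqxx.
exists s => z; rewrite -row_free_unit -kermx_eq0 => nonunit.
have : root (char_poly A) z by rewrite -eigenvalue_root_char.
by rewrite charA rootM root_prod_XsubC (negbTE (q_noroot q_neq0 z)).
Qed.

Section RationalCosine.
Variable R : realType.

Lemma cos_ratpi_periodic (k N q r : nat) : (0 < N)%N ->
  cos (2 * pi * (k%:R / N%:R) * (N * q + r)%:R)
  = cos (2 * pi * (k%:R / N%:R) * r%:R) :> R.
Proof.
move=> N_gt0; rewrite -[RHS](periodicn (@cosD2pi R) (k * q)); congr cos.
rewrite -mulr_natr natrD !natrM mulr2n; field.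
by rewrite pnatr_eq0 -lt0n.
Qed.

Lemma cos_ratpi_refl (k N s : nat) : (s <= N)%N ->
  cos (2 * pi * (k%:R / N%:R) * (N - s)%:R)
  = cos (2 * pi * (k%:R / N%:R) * s%:R) :> R.
Proof.
move=> sN; have [->|N_gt0] := posnP N; first by rewrite !invr0 !mulr0 !mul0r.
rewrite -[RHS]cosN -[RHS](periodicn (@cosD2pi R) k); congr cos.
rewrite -mulr_natr natrB // mulr2n; field.
by rewrite pnatr_eq0 -lt0n.
Qed.
End RationalCosine.

Lemma decomp_pfactor3 n r : (0 < r < 3 ^ n)%N ->
  exists m t c, [/\ r = (3 ^ m * t)%N, ~~ (3 %| t)%N,
                    (3 ^ n = 3 ^ m * (3 * c))%N & (t < 3 * c)%N].
Proof.
case/andP=> r_gt0 r_lt.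
have [t co_t r_eq] := pfactor_coprime (isT : prime 3) r_gt0.
set m := logn 3 r in r_eq.
have t_gt0 : (0 < t)%N by move: r_gt0; rewrite r_eq muln_gt0 => /andP[].
have m_lt : (m < n)%N.
  rewrite -(ltn_exp2l _ _ (isT : (1 < 3)%N)) (leq_ltn_trans _ r_lt) //.
  by rewrite r_eq leq_pmull.
exists m, t, (3 ^ (n - m.+1))%N; rewrite -prime_coprime // mulnC -r_eq.
have n_eq : (3 ^ n = 3 ^ m * (3 * 3 ^ (n - m.+1)))%N.
  by rewrite mulnA -expnSr -expnD subnKC.
by split=> //; rewrite -(ltn_pmul2l (expn_gt0 3 m)) -n_eq mulnC -r_eq.
Qed.

Section Walk.
Context {R : realType} (p : R).

Lemma pright_pfactor m t : ~~ (3 %| t)%N ->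
  pright p (3 ^ m * t) = if (t %% 3 == 1)%N then p else 1 - p.
Proof.
move=> t3; rewrite /pright mulnC logn_Gauss ?prime_coprime // pfactorK //.
by rewrite mulnK ?expn_gt0.
Qed.

Lemma pright_expnM n q : (0 < q)%N -> pright p (3 ^ n * q) = pright p q.
Proof.
move=> q_gt0; have [t co_t ->] := pfactor_coprime (isT : prime 3) q_gt0.
rewrite prime_coprime // in co_t.
by rewrite [(t * _)%N]mulnC mulnA -expnD !pright_pfactor.
Qed.

Lemma pright_expnD n q r : (0 < r < 3 ^ n)%N ->
  pright p (3 ^ n * q + r) = pright p r.
Proof.
move=> /decomp_pfactor3 [m [t [c [-> t3 n_eq _]]]].
have -> : (3 ^ n * q + 3 ^ m * t = 3 ^ m * (3 * (c * q) + t))%N.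
  by rewrite n_eq mulnDr !mulnA.
have t3' : ~~ (3 %| 3 * (c * q) + t)%N by rewrite dvdn_addr ?dvdn_mulr.
by rewrite !pright_pfactor // -modnDm modnMr add0n modn_mod.
Qed.

Lemma pright_expnB n s : (0 < s < 3 ^ n)%N ->
  pright p (3 ^ n - s) = 1 - pright p s.
Proof.
move=> /decomp_pfactor3 [m [t [c [-> t3 n_eq t_lt]]]].
have -> : (3 ^ n - 3 ^ m * t = 3 ^ m * (3 * c - t))%N by rewrite n_eq mulnBr.
have e_lt : (t %% 3 < 3)%N by rewrite ltn_mod.
have e_neq0 : (t %% 3 != 0)%N by [].
have mod_refl : ((3 * c - t) %% 3 = 3 - t %% 3)%N.
  have -> : (3 * c - t = (c - t %/ 3).-1 * 3 + (3 - t %% 3))%N.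
    move: (divn_eq t 3) t_lt e_lt e_neq0.
    by move: (t %/ 3)%N (t %% 3)%N => d e; lia.
  by rewrite modnMDl modn_small // ltn_subrL lt0n e_neq0.
have t3' : ~~ (3 %| 3 * c - t)%N by rewrite /dvdn mod_refl subn_eq0 -ltnNge.
rewrite !pright_pfactor // mod_refl.
by case: (t %% 3)%N e_lt e_neq0 => [|[|[|e]]] //= _ _; rewrite opprB addrC subrK.
Qed.

Lemma walk_split P x y : (0 < P)%N ->
  walk p P x y
  = (y == x.+1)%:R * walk p P x x.+1 + (y == x.-1)%:R * walk p P x x.-1.
Proof.
move=> P_gt0; rewrite /walk.
have [->|x_gt0] := posnP x; first by rewrite mulr1 mulr0 addr0.
have [->|xP] := eqVneq x P.
  have -> : (P.+1 == P.-1) = false by lia.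
  by rewrite eqxx mulr0 add0r mulr1.
have -> : (x.-1 == x.+1) = false by lia.
have -> : (x.-1.+1 == x) by lia.
rewrite eqxx; case: (y =P x.+1) => [->|_].
  have -> : (x.+1 == x.-1) = false by lia.
  by rewrite /=; ring.
have -> : (y.+1 == x) = (y == x.-1) by lia.
by case: (y == x.-1) => /=; ring.
Qed.

Lemma walk_interior_r P x : (0 < x < P)%N -> walk p P x x.+1 = pright p x.
Proof.
case/andP=> x_gt0 xP; rewrite /walk (gtn_eqF x_gt0) (ltn_eqF xP).
by rewrite eqxx.
Qed.

Lemma walk_interior_l P x : (0 < x < P)%N -> walk p P x x.-1 = 1 - pright p x.
Proof.
case/andP=> x_gt0 xP; rewrite /walk (gtn_eqF x_gt0) (ltn_eqF xP).
have -> : (x.-1 == x.+1) = false by lia.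
by rewrite prednK ?eqxx.
Qed.

Lemma walk_top_r P : (0 < P)%N -> walk p P P P.+1 = 0.
Proof.
move=> P_gt0; rewrite /walk (gtn_eqF P_gt0) eqxx.
by have -> : (P.+1 == P.-1) = false by lia.
Qed.

Lemma walk_top_l P : (0 < P)%N -> walk p P P P.-1 = 1.
Proof. by move=> P_gt0; rewrite /walk (gtn_eqF P_gt0) !eqxx. Qed.

Lemma walk_stochastic P x : (0 < P)%N -> (x <= P)%N ->
  walk p P x x.+1 + walk p P x x.-1 = 1.
Proof.
move=> P_gt0 xP; have [->|x_gt0] := posnP x; first by rewrite /walk /= addr0.
have [x_lt|->] : (x < P)%N \/ x = P by lia.
  by rewrite walk_interior_r ?walk_interior_l ?x_gt0 // addrC subrK.
by rewrite walk_top_r ?walk_top_l ?add0r.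
Qed.

Lemma walk_expnM_r n K x : (0 < K)%N -> (x <= K)%N ->
  walk p (3 ^ n * K) (3 ^ n * x) (3 ^ n * x).+1 = walk p K x x.+1.
Proof.
move=> K_gt0 xK; have N_gt0 := expn_gt0 3 n.
have [->|x_gt0] := posnP x; first by rewrite muln0.
have [x_lt|->] : (x < K)%N \/ x = K by lia.
  rewrite !walk_interior_r ?pright_expnM ?x_gt0 ?x_lt //.
  by rewrite muln_gt0 N_gt0 x_gt0 ltn_pmul2l.
by rewrite !walk_top_r ?muln_gt0 ?N_gt0.
Qed.

Lemma walk_expnM_l n K x : (0 < K)%N -> (x <= K)%N ->
  walk p (3 ^ n * K) (3 ^ n * x) (3 ^ n * x).-1 = walk p K x x.-1.
Proof.
move=> K_gt0 xK; have N_gt0 := expn_gt0 3 n.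
have [->|x_gt0] := posnP x; first by rewrite muln0.
have [x_lt|->] : (x < K)%N \/ x = K by lia.
  rewrite !walk_interior_l ?pright_expnM ?x_gt0 ?x_lt //.
  by rewrite muln_gt0 N_gt0 x_gt0 ltn_pmul2l.
by rewrite !walk_top_l ?muln_gt0 ?N_gt0.
Qed.
End Walk.

Section SpectralDecimation.
Variables (R : realType) (p beta : R) (l n k : nat).
Hypothesis n_le_l : (n <= l)%N.

Local Notation C := R[i].
Local Notation N := (3 ^ n)%N.
Local Notation K := (3 ^ (l - n))%N.
Local Notation L := (3 ^ l)%N.
Local Notation w P x y := (walk p P x y)%:C.
Local Notation Hm := (Hop p beta (k%:R / N%:R) 0 l).

Lemma N_gt0 : (0 < N)%N. Proof. by rewrite expn_gt0. Qed.
Lemma K_gt0 : (0 < K)%N. Proof. by rewrite expn_gt0. Qed.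
Lemma L_gt0 : (0 < L)%N. Proof. by rewrite expn_gt0. Qed.

Lemma L_eq : L = (N * K)%N.
Proof. by rewrite -expnD subnKC. Qed.

Lemma N_le_L : (N <= L)%N.
Proof. by rewrite L_eq leq_pmulr ?K_gt0. Qed.

Definition potential (x : nat) : R := beta * cos (2 * pi * (k%:R / N%:R) * x%:R + 0).

Lemma potential_periodic q r : potential (N * q + r) = potential r.
Proof. by rewrite /potential !addr0 cos_ratpi_periodic ?N_gt0. Qed.

Lemma potential_refl s : (s <= N)%N -> potential (N - s) = potential s.
Proof. by move=> sN; rewrite /potential !addr0 cos_ratpi_refl. Qed.

Lemma potential_coarse q : potential (N * q) = beta.
Proof.
by rewrite -[(N * q)%N]addn0 potential_periodic /potential mulr0 addr0 cos0 mulr1.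
Qed.

Definition Hz (z : C) (f : nat -> C) (x : nat) : C :=
  ((potential x)%:C - z) * f x - w L x x.+1 * f x.+1 - w L x x.-1 * f x.-1.

Lemma eq_Hz z f g x : f x.-1 = g x.-1 -> f x = g x -> f x.+1 = g x.+1 ->
  Hz z f x = Hz z g x.
Proof. by rewrite /Hz => -> -> ->. Qed.

Lemma Hz_lincomb z a b f g x :
  Hz z (fun s => a * f s + b * g s) x = a * Hz z f x + b * Hz z g x.
Proof. by rewrite /Hz; ring. Qed.

Lemma sum_Hz_row z m x (f : nat -> C) : (x < m)%N -> ((x.+1 < m) || (x == L))%N ->
  \sum_(y < m) (((y : nat) == x)%:R * ((potential x)%:C - z) - w L x y) * f y
  = Hz z f x.
Proof.
move=> x_lt x_next.
rewrite (eq_bigr (fun y : 'I_m => (((y : nat) == x)%:R * ((potential x)%:C - z)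
    + ((y : nat) == x.+1)%:R * - w L x x.+1
    + ((y : nat) == x.-1)%:R * - w L x x.-1) * f y)).
  2: by move=> y _; rewrite (walk_split p L x y L_gt0) rmorphD !rmorphM !rmorph_nat; ring.
rewrite sum_tridiag x_lt (_ : x.-1 < m)%N; last by lia.
rewrite /Hz; case/orP: x_next => [-> | /eqP ->]; first by rewrite /=; ring.
by rewrite walk_top_r ?L_gt0 // rmorph0 /=; ring.
Qed.

Lemma Hz_transl z f q r : (0 < r < N)%N -> (N * q + r < L)%N ->
  Hz z f (N * q + r) = Hz z (fun s => f (N * q + s)) r.
Proof.
move=> r_int x_lt; have N_L := N_le_L.
have x_int : (0 < N * q + r < L)%N by lia.
have r_int' : (0 < r < L)%N by lia.
rewrite /Hz potential_periodic !walk_interior_r ?walk_interior_l ?pright_expnD //.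
by rewrite -addnS (_ : (N * q + r).-1 = N * q + r.-1)%N //; lia.
Qed.

Lemma Hz_refl z f r : (0 < r < N)%N ->
  Hz z (fun s => f (N - s)%N) r = Hz z f (N - r).
Proof.
move=> r_int; have N_L := N_le_L.
have s_int : (0 < N - r < L)%N by lia.
have r_int' : (0 < r < L)%N by lia.
rewrite /Hz potential_refl; last by lia.
have -> : (N - r.+1 = (N - r).-1)%N by lia.
have -> : (N - r.-1 = (N - r).+1)%N by lia.
rewrite !walk_interior_r ?walk_interior_l ?pright_expnB // !rmorphB !rmorph1; ring.
Qed.

Lemma Hop_sub_entry z (x y : 'I_L.+1) :
  (Hm - z%:M) x y = ((y : nat) == x)%:R * ((potential x)%:C - z) - w L x y.
Proof.
rewrite !mxE rmorphB /potential.
have -> : (x == y) = ((y : nat) == x) by rewrite eq_sym.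
by case: (_ == _); rewrite /= ?rmorph0; ring.
Qed.

Lemma Hz_mulmx z m (F : nat -> 'I_m -> C) (x : 'I_L.+1) j :
  ((Hm - z%:M) *m \matrix_(y, i) F y i) x j = Hz z (F^~ j) x.
Proof.
rewrite mxE (eq_bigr (fun y : 'I_L.+1 =>
  (((y : nat) == x)%:R * ((potential x)%:C - z) - w L x y) * F y j)).
  by apply: sum_Hz_row => //; have := ltn_ord x; lia.
by move=> y _; rewrite Hop_sub_entry mxE.
Qed.

(* Rows 0 and N of cellH vanish, so (cellH - z) v = -z e_0 forces v 0 = 1 and
   v N = 0 once z != 0, and the Hop equation at the interior points. *)
Definition cellH : 'M[C]_N.+1 := \matrix_(x, y)
  if (0 < x < N)%N then ((y : nat) == x)%:R * (potential x)%:C - w L x y else 0.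

Definition cell_sol (z : C) : 'cV[C]_N.+1 :=
  invmx (cellH - z%:M) *m ((- z) *: delta_mx 0 0).

Definition harm (z : C) (r : nat) : C :=
  if r == 0%N then 1 else if (r < N)%N then cell_sol z (inord r) 0 else 0.

Lemma cellH_row z (x : 'I_N.+1) (v : 'cV[C]_N.+1) :
  ((cellH - z%:M) *m v) x 0 =
  if (0 < x < N)%N then Hz z (fun y => v (inord y) 0) x else - z * v x 0.
Proof.
case: ifP => x_int.
  rewrite mxE (eq_bigr (fun y : 'I_N.+1 =>
    (((y : nat) == x)%:R * ((potential x)%:C - z) - w L x y) * v (inord y) 0)).
    by apply: sum_Hz_row; lia.
  move=> y _; rewrite !mxE x_int inord_val.
  have -> : (x == y) = ((y : nat) == x) by rewrite eq_sym.
  by case: (_ == _); rewrite /=; ring.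
rewrite mulmxBl mul_scalar_mx !mxE big1 ?sub0r ?mulNr // => y _.
by rewrite !mxE x_int mul0r.
Qed.

Lemma cellH_unit_neq0 z : cellH - z%:M \in unitmx -> z != 0.
Proof.
apply: contraTneq => ->; rewrite unitmxE (expand_det_row _ 0) big1 ?unitr0 // => j _.
by rewrite !mxE /= mul0rn subr0 mul0r.
Qed.

Section CellSolution.
Variable z : C.
Hypothesis cell_unit : cellH - z%:M \in unitmx.

Lemma cell_sol_row (x : 'I_N.+1) :
  ((cellH - z%:M) *m cell_sol z) x 0 = - z * ((x : nat) == 0%N)%:R.
Proof. by rewrite mulKVmx // !mxE andbT mulr_natr. Qed.

Lemma cell_sol_harm y : (y <= N)%N -> cell_sol z (inord y) 0 = harm z y.
Proof.
have z_neq0 : z != 0 by apply: cellH_unit_neq0.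
have boundary (x : 'I_N.+1) :
    (0 < x < N)%N = false -> cell_sol z x 0 = ((x : nat) == 0%N)%:R.
  move=> x_bd; have := cell_sol_row x; rewrite cellH_row x_bd.
  by move/mulfI; apply; rewrite oppr_eq0.
move=> yN; rewrite /harm; have y_val : (inord y : 'I_N.+1) = y :> nat by rewrite inordK.
case: eqP => [y0 | /eqP y_neq0].
  by rewrite boundary y_val y0 //; rewrite y_val y0.
case: ltnP => [// | y_ge].
rewrite boundary y_val; first by move: y_neq0 => /negbTE ->.
by lia.
Qed.

Lemma harm_harmonic r : (0 < r < N)%N -> Hz z (harm z) r = 0.
Proof.
move=> r_int; have := cell_sol_row (inord r).
rewrite cellH_row inordK ?r_int; last by lia.
rewrite (gtn_eqF (proj1 (andP r_int))) mulr0 => <-.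
by apply: eq_Hz; rewrite cell_sol_harm ?inordK //; lia.
Qed.

End CellSolution.

Lemma harm_ge z s : (N <= s)%N -> harm z s = 0.
Proof. by move=> Ns; have N_pos := N_gt0; rewrite /harm !ifF //; lia. Qed.

Definition tent (z : C) (x y : nat) : C :=
  harm z (if (N * y <= x)%N then x - N * y else N * y - x)%N.

Lemma tent_cell z q r y : (r <= N)%N ->
  tent z (N * q + r) y = (y == q)%:R * harm z r + (y == q.+1)%:R * harm z (N - r).
Proof.
move=> rN; rewrite /tent; have N_pos := N_gt0.
have [y_lt|y_gt|->] := ltngtP y q.
- have : (N * y.+1 <= N * q)%N by rewrite leq_pmul2l.
  rewrite mulnS (_ : y == q.+1 = false) ?mul0r ?addr0; last by lia.
  by move=> Ny_le; rewrite ifT ?harm_ge //; lia.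
- have [->|y_ge] := eqVneq y q.+1.
    by rewrite /= mulr0n mulr1n mul0r add0r mul1r mulnS; congr (harm z); case: ifP; lia.
  have : (N * q.+2 <= N * y)%N by rewrite leq_pmul2l //; lia.
  rewrite /= !mulnS mulr0n !mul0r addr0 => Ny_ge.
  by rewrite ifF ?harm_ge //; lia.
- rewrite (_ : q == q.+1 = false) /= ?mulr0n ?mulr1n ?mul0r ?addr0 ?mul1r; last by lia.
  by congr (harm z); case: ifP; lia.
Qed.

Lemma tent_coarse z q y : tent z (N * q) y = (y == q)%:R.
Proof.
rewrite -[(N * q)%N]addn0 tent_cell // subn0 (harm_ge z _ (leqnn N)).
by rewrite mulr0 addr0 /harm eqxx mulr1.
Qed.

Lemma Hz_tent_fine z q r j : cellH - z%:M \in unitmx ->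
  (0 < r < N)%N -> (N * q + r < L)%N -> Hz z (tent z ^~ j) (N * q + r) = 0.
Proof.
move=> cell_unit r_int x_lt; rewrite Hz_transl //.
have -> : Hz z (fun s => tent z (N * q + s) j) r =
    Hz z (fun s => (j == q)%:R * harm z s + (j == q.+1)%:R * harm z (N - s)%N) r.
  by apply: eq_Hz; rewrite /= tent_cell //; lia.
rewrite Hz_lincomb Hz_refl // !harm_harmonic //; first by rewrite !mulr0 addr0.
lia.
Qed.

Lemma Hz_tent_coarse z q j : (q <= K)%N ->
  Hz z (tent z ^~ j) (N * q)
  = (j == q)%:R * (beta%:C - z - harm z 1) - harm z N.-1 * w K q j.
Proof.
move=> qK; have N_pos := N_gt0.
have w_r : w L (N * q) (N * q).+1 = w K q q.+1 by rewrite L_eq walk_expnM_r ?K_gt0.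
have w_l : w L (N * q) (N * q).-1 = w K q q.-1 by rewrite L_eq walk_expnM_l ?K_gt0.
have right : tent z (N * q).+1 j = (j == q)%:R * harm z 1 + (j == q.+1)%:R * harm z N.-1.
  by rewrite -addn1 tent_cell // subn1.
have left : w K q q.-1 * tent z (N * q).-1 j
    = w K q q.-1 * ((j == q.-1)%:R * harm z N.-1 + (j == q)%:R * harm z 1).
  case: q qK {w_r w_l right} => [|q] qK; first by rewrite /walk /= rmorph0 !mul0r.
  have -> : (N * q.+1).-1 = (N * q + N.-1)%N by rewrite mulnS; lia.
  rewrite tent_cell ?leq_pred // (_ : N - N.-1 = 1)%N /=; [ring | lia].
have stoch : w K q q.-1 = 1 - w K q q.+1.
  have := congr1 (fun x : R => x%:C) (walk_stochastic p K q K_gt0 qK).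
  by rewrite /= rmorphD rmorph1 => <-; ring.
have w_split : w K q j = (j == q.+1)%:R * w K q q.+1 + (j == q.-1)%:R * w K q q.-1.
  by rewrite (walk_split p K q j K_gt0) rmorphD !rmorphM !rmorph_nat.
rewrite /Hz potential_coarse tent_coarse right w_r w_l left w_split stoch; ring.
Qed.

Definition tent_mx (z : C) : 'M[C]_(L.+1, K.+1) := \matrix_(x, y) tent z x y.

Definition phi_val (z : C) : C := harm z N.-1.
Definition psi_val (z : C) : C := phi_val z - beta%:C + z + harm z 1.
Definition renorm_mx (z : C) : 'M[C]_K.+1 := phi_val z *: Lap p (l - n) - (psi_val z)%:M.

Lemma renorm_mx_entry z (q j : 'I_K.+1) :
  renorm_mx z q j
  = ((j : nat) == q)%:R * (beta%:C - z - harm z 1) - harm z N.-1 * w K q j.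
Proof.
rewrite !mxE rmorphB rmorph_nat /psi_val /phi_val.
have -> : (q == j) = ((j : nat) == q) by rewrite eq_sym.
by case: (_ == _); rewrite /=; ring.
Qed.

Lemma incl_mulmx m (M : 'M[C]_(K.+1, m)) (x : 'I_L.+1) j :
  (incl R l n *m M) x j = if (N %| x)%N then M (inord (x %/ N)) j else 0.
Proof.
rewrite mxE; case: ifPn => [N_x | N_x].
  have xN_le : (x %/ N <= K)%N by rewrite leq_divLR ?N_gt0 // mulnC -L_eq -ltnS.
  have x_eq : (x : nat) = (N * (x %/ N))%N by rewrite mulnC divnK.
  rewrite (eq_bigr (fun y : 'I_K.+1 => ((y : nat) == x %/ N)%N%:R * M (inord y) j)).
    by rewrite (sumr_ord_eqn _ _ (fun y => M (inord y) j)) ltnS xN_le mul1r.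
  move=> y _; rewrite mxE inord_val; congr (_%:R * _).
  by rewrite {1}x_eq eqn_pmul2l ?N_gt0 // eq_sym.
rewrite big1 // => y _; rewrite mxE; case: eqP => [x_eq | _]; last by rewrite mul0r.
by move: N_x; rewrite x_eq dvdn_mulr.
Qed.

Lemma harmonic_extension z : cellH - z%:M \in unitmx ->
  (Hm - z%:M) *m tent_mx z = incl R l n *m renorm_mx z.
Proof.
move=> cell_unit; apply/matrixP => x j.
rewrite (Hz_mulmx z _ (fun x y => tent z x y)) incl_mulmx /dvdn.
have x_le : (x <= L)%N by rewrite -ltnS.
have x_eq : x = (N * (x %/ N) + x %% N)%N :> nat by rewrite mulnC -divn_eq.
rewrite [in LHS]x_eq; set q := (x %/ N)%N; set r := (x %% N)%N.
have [r0 | r_gt0] := posnP r.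
  have q_le : (q <= K)%N.
    by rewrite -(leq_pmul2l N_gt0) -L_eq mulnC (leq_trans (leq_divM _ _)).
  by rewrite r0 addn0 Hz_tent_coarse // renorm_mx_entry inordK.
have x_lt : (N * q + r < L)%N.
  rewrite -x_eq ltn_neqAle x_le andbT; apply: contraTneq r_gt0 => x_L.
  by rewrite /r x_L L_eq modnMr.
by rewrite Hz_tent_fine // r_gt0 ltn_mod N_gt0.
Qed.

Lemma incl_adjoint_tent_mx z : (map_mx conjc (incl R l n))^T *m tent_mx z = 1%:M.
Proof.
apply/matrixP => i j; rewrite !mxE.
rewrite (eq_bigr (fun x : 'I_L.+1 => ((x : nat) == N * i)%:R * tent z x j)).
  rewrite (sumr_ord_eqn _ _ (fun x => tent z x j)) tent_coarse ltnS (_ : N * i <= L)%N.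
    by rewrite mul1r eq_sym.
  by rewrite L_eq leq_pmul2l ?N_gt0 // -ltnS.
by move=> x _; rewrite !mxE conjc_nat.
Qed.

Definition sim_phi (z : C) : option C :=
  if cellH - z%:M \in unitmx then Some (phi_val z) else None.
Definition sim_psi (z : C) : option C :=
  if cellH - z%:M \in unitmx then Some (psi_val z) else None.

Lemma Hop_spectrally_similar :
  spectrally_similar (incl R l n) Hm (Lap p (l - n)) sim_phi sim_psi.
Proof.
move=> z a b; rewrite /sim_phi /sim_psi; case: ifP => // cell_unit [<-] [<-] H_unit _.
by have [_ ->] := compression_invmx (incl_adjoint_tent_mx z)
  (harmonic_extension z cell_unit) H_unit.
Qed.

Lemma sim_nondegenerate : exists S : seq C, forall z, z \notin S ->
  exists a b : C, [/\ sim_phi z = Some a, sim_psi z = Some b,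
    Hm - z%:M \in unitmx & a *: Lap p (l - n) - b%:M \in unitmx].
Proof.
have [S1 nonunit_H] := eigenvalues_finite Hm.
have [S2 nonunit_cell] := eigenvalues_finite cellH.
exists (S1 ++ S2) => z; rewrite mem_cat negb_or => /andP[zS1 zS2].
have H_unit := contraR (nonunit_H z) zS1.
have cell_unit := contraR (nonunit_cell z) zS2.
exists (phi_val z), (psi_val z); rewrite /sim_phi /sim_psi cell_unit.
have [renorm_unit _] := compression_invmx (incl_adjoint_tent_mx z)
  (harmonic_extension z cell_unit) H_unit.
by split.
Qed.
End SpectralDecimation.

Theorem lemma3p4 (R : realType) (p beta : R) (l n k : nat) :
  0 < p < 1 -> (1 <= l)%N -> (1 <= n <= l)%N -> (k < 3 ^ n)%N ->
  exists phi psi : R[i] -> option R[i],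
    spectrally_similar (incl R l n)
      (Hop p beta (k%:R / (3 ^ n)%:R) 0 l) (Lap p (l - n)) phi psi
    /\ (* non-degeneracy: both sides are defined outside a finite set of z *)
    (exists S : seq R[i], forall z : R[i], z \notin S ->
       exists a b : R[i], [/\ phi z = Some a, psi z = Some b,
         (Hop p beta (k%:R / (3 ^ n)%:R) 0 l - z%:M) \in unitmx
         & (a *: Lap p (l - n) - b%:M) \in unitmx]).
Proof.
move=> _ _ /andP[_ n_le_l] _; do 2 eexists.
by split; [exact: Hop_spectrally_similar n_le_l | exact: sim_nondegenerate n_le_l].
Qed.
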